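(* Let $n$ be even, let $\mathbf{X}=\{X_{rj}:r,j=1,\dots,n\}$ be the switch variables of the standard lightbulb process with $X_j=(\sum_{r=1}^nX_{rj})\bmod 2$, and for $i\in\{1,\dots,n\}$ construct $\mathbf{X}^i$ as follows: let $J^i$ have conditional distribution, given $\mathbf{X}$, uniform on $\{j:X_{n/2,j}=1-X_{n/2,i}\}$; if $X_i=1$ set $\mathbf{X}^i=\mathbf{X}$; otherwise let $\mathbf{X}^i$ equal $\mathbf{X}$ except that the values of $X_{n/2,i}$ and $X_{n/2,J^i}$ are interchanged. Then for all $i=1,\dots,n$, $\mathcal{L}(\mathbf{X}^i)=\mathcal{L}(\mathbf{X}\mid X_i=1)$.
   Context: Standard lightbulb process: $n$ bulbs, all initially off, $n$ stages; at stage $r=1,\dots,n$ a uniformly random subset of exactly $r$ bulbs is toggled, independently across stages. The switch variable $X_{rj}\in\{0,1\}$ is $1$ iff bulb $j$ is toggled at stage $r$; thus $P(X_{rj}=e_{rj}\ \forall r,j)=\prod_{r=1}^n\binom{n}{r}^{-1}$ if $\sum_je_{rj}=r$ for all $r$, and $0$ otherwise. $\mathcal{L}(\cdot)$ denotes the law (distribution). *)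

From HB Require Import structures.
From mathcomp Require Import all_boot all_order all_algebra.
Set Implicit Arguments. Unset Strict Implicit. Unset Printing Implicit Defensive.
Import Order.TTheory GRing.Theory Num.Theory.
Local Open Scope ring_scope.

(* A switch configuration: e r j = X_{(r+1) j}; stage r = 1..n is row index r-1,
   bulb j = 1..n is column index j-1. *)
Definition config (n : nat) := {ffun 'I_n -> {ffun 'I_n -> bool}}.

Definition valid n (e : config n) : bool :=
  [forall r : 'I_n, #|[set j | e r j]| == (r.+1)%N].
Definition probX n (e : config n) : rat :=
  if valid e then \prod_(r < n) ('C(n, r.+1)%:R)^-1 else 0.

Definition bulb n (e : config n) (j : 'I_n) : bool :=
  odd (\sum_(r < n) (e r j : nat)).

(* the row index of stage n/2 (i.e. value n/2 - 1), built from any i : 'I_n *)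
Lemma mid_proof n (i : 'I_n) : ((n./2).-1 < n)%N.
Proof.
case: n i => [[]//|n _]; rewrite ltnS.
apply: leq_trans (leq_pred _) _; rewrite leq_half_double.
by rewrite -addnn ltnS leq_addr.
Qed.
Definition mid n (i : 'I_n) : 'I_n := Ordinal (mid_proof i).

Definition swap n (i : 'I_n) (e : config n) (j : 'I_n) : config n :=
  [ffun r => if r == mid i then
               [ffun k => if k == i then e r j else if k == j then e r i else e r k]
             else e r].

Definition Jset n (i : 'I_n) (e : config n) : {set 'I_n} :=
  [set j | e (mid i) j == ~~ e (mid i) i].

(* conditional law of X^i given X = e, evaluated at f *)
Definition kernel n (i : 'I_n) (e f : config n) : rat :=
  if bulb e i then (f == e)%:R
  else (#|Jset i e|%:R)^-1 * \sum_(j in Jset i e) (f == swap i e j)%:R.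

Definition lawXi n (i : 'I_n) (f : config n) : rat :=
  \sum_(e : config n) probX e * kernel i e f.

Definition condlaw n (i : 'I_n) (f : config n) : rat :=
  probX f * (bulb f i)%:R / \sum_(e : config n) probX e * (bulb e i)%:R.

(* Swapping the entries of bulbs i and j in row n/2 preserves validity of a
   configuration, hence its probability, and it is an involution that flips
   X_i exactly when X_{n/2,j} <> X_{n/2,i}.  For n even, every valid
   configuration has exactly n/2 admissible partners j in that row.  Hence
   the mass that the swap step sends to f is P(X = f) [X_i(f) = 1], the same
   as the mass that stays at f, so L(X^i)(f) = 2 P(X = f) [X_i(f) = 1].
   Summing over f, since the swap step is a Markov kernel, gives
   P(X_i = 1) = 1/2, and the theorem follows. *)
From HB Require Import structures.
From mathcomp Require Import all_boot all_order all_algebra fingroup perm.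
From mathcomp Require Import ring.
Set Implicit Arguments. Unset Strict Implicit. Unset Printing Implicit Defensive.
Import Order.TTheory GRing.Theory Num.Theory.
Local Open Scope ring_scope.

Lemma sumr_mul_eqr (R : pzSemiRingType) (T : finType) (F : T -> R) (c : T) :
  \sum_(x : T) F x * (x == c)%:R = F c.
Proof.
rewrite (bigD1 c) //= eqxx mulr1 big1 ?addr0 // => x /negbTE ->.
by rewrite mulr0.
Qed.

Lemma sumr_eq1 (R : pzSemiRingType) (T : finType) (c : T) :
  \sum_(x : T) (x == c)%:R = 1 :> R.
Proof.
by rewrite -[RHS](sumr_mul_eqr (fun _ => 1) c); apply: eq_bigr => x _; rewrite mul1r.
Qed.

Lemma sum_card_eq (R : pzSemiRingType) (T : finType) k :
  \sum_(g : {ffun T -> bool}) (#|[set x | g x]| == k)%:R = 'C(#|T|, k)%:R :> R.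
Proof.
rewrite (reindex (fun A : {set T} => [ffun x => x \in A])) /=; last first.
  apply: onW_bij; exists (fun g : {ffun T -> bool} => [set x | g x]) => [A|g].
    by apply/setP => x; rewrite inE ffunE.
  by apply/ffunP => x; rewrite ffunE inE.
rewrite -card_draws -sum1_card natr_sum [RHS]big_mkcond /=.
apply: eq_bigr => A _; rewrite inE.
have -> : #|[set x | [ffun x => x \in A] x]| = #|A|.
  by apply: eq_card => x; rewrite inE ffunE.
by case: (_ == _).
Qed.

Section Lightbulb.

Variable n : nat.

Lemma probX0 (e : config n) : ~~ valid e -> probX e = 0.
Proof. by rewrite /probX => /negbTE ->. Qed.

Lemma valid_prod (e : config n) :
  (valid e)%:R = \prod_(r < n) (#|[set j | e r j]| == r.+1)%:R :> rat.
Proof.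
have [/forallP row_ok | /forallPn [r bad_r]] := boolP (valid e).
  by rewrite big1 // => r _; rewrite row_ok.
by rewrite (bigD1 r) //= (negbTE bad_r) mul0r.
Qed.

(* Expanded row by row, the sum factors; row r has 'C(n, r+1) admissible values. *)
Lemma sum_probX : \sum_(e : config n) probX e = 1.
Proof.
pose c := \prod_(r < n) ('C(n, r.+1)%:R : rat)^-1.
transitivity (\sum_(e : config n) (valid e)%:R * c).
  by apply: eq_bigr => e _; rewrite /probX; case: (valid e); rewrite ?mul1r ?mul0r.
rewrite -big_distrl /=.
under eq_bigr do rewrite valid_prod.
rewrite -(bigA_distr_bigA (fun (r : 'I_n) (g : {ffun 'I_n -> bool}) =>
   (#|[set j | g j]| == r.+1)%:R : rat)) /=.
under eq_bigr do rewrite sum_card_eq card_ord.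
rewrite /c -big_split big1 //= => r _.
by rewrite mulfV // pnatr_eq0 -lt0n bin_gt0.
Qed.

Variable i : 'I_n.

Lemma swap_row (e : config n) j r :
  swap i e j r = if r == mid i then [ffun k => e r (tperm i j k)] else e r.
Proof.
rewrite /swap ffunE; case: eqP => // _; apply/ffunP => k; rewrite !ffunE.
case: tpermP => [->|->|/eqP/negbTE -> /eqP/negbTE ->] //; first by rewrite eqxx.
by case: eqP => [->|]; rewrite ?eqxx.
Qed.

Lemma swapK (e : config n) j : swap i (swap i e j) j = e.
Proof.
apply/ffunP => r; rewrite !swap_row; case: eqP => [->|//].
by apply/ffunP => k; rewrite !ffunE ?eqxx ?ffunE tpermK.
Qed.

Lemma eq_swap (e f : config n) j : (f == swap i e j) = (e == swap i f j).
Proof. by apply/eqP/eqP => ->; rewrite swapK. Qed.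

Lemma valid_swap (e : config n) j : valid (swap i e j) = valid e.
Proof.
apply: eq_forallb => r; rewrite swap_row; case: ifP => // _.
suff -> : [set k | [ffun k => e r (tperm i j k)] k] = tperm i j @^-1: [set k | e r k].
  by rewrite card_preimset //; apply: perm_inj.
by apply/setP => k; rewrite !inE ffunE.
Qed.

Lemma probX_swap (e : config n) j : probX (swap i e j) = probX e.
Proof. by rewrite /probX valid_swap. Qed.

Lemma mem_Jset_swap (e : config n) j :
  (j \in Jset i (swap i e j)) = (j \in Jset i e).
Proof.
rewrite !inE swap_row eqxx !ffunE tpermL tpermR.
by case: (e _ i); case: (e _ j).
Qed.

Lemma bulb_swap (e : config n) j :
  j \in Jset i e -> bulb (swap i e j) i = ~~ bulb e i.
Proof.
rewrite inE => /eqP e_j; rewrite /bulb (bigD1 (mid i)) //= [in RHS](bigD1 (mid i)) //=.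
rewrite swap_row eqxx ffunE tpermL e_j !oddD.
rewrite (eq_bigr (fun r => (e r i : nat))); last first.
  by move=> r /negbTE r_mid; rewrite swap_row r_mid.
by case: (e _ i); rewrite /= ?negbK.
Qed.

Hypothesis n_even : ~~ odd n.

Lemma half_neq0 : (n./2)%:R != 0 :> rat.
Proof.
rewrite pnatr_eq0 -lt0n half_gt0.
by case: n n_even i => [|[|m]] // _ [].
Qed.

(* The row n/2 of a valid configuration has n/2 ones and n/2 zeros, and
   Jset i e is one of these two halves. *)
Lemma card_Jset (e : config n) : valid e -> #|Jset i e| = n./2.
Proof.
move=> /forallP /(_ (mid i)) /eqP card_row.
have card_ones : #|[set j | e (mid i) j]| = n./2.
  by rewrite card_row /= prednK // lt0n -(pnatr_eq0 rat) half_neq0.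
case e_i: (e (mid i) i).
  have -> : Jset i e = ~: [set j | e (mid i) j].
    by apply/setP => k; rewrite !inE e_i /=; case: (e _ k).
  apply/eqP; rewrite -(eqn_add2l n./2) -{1}card_ones cardsC card_ord.
  by rewrite addnn even_halfK.
suff -> : Jset i e = [set j | e (mid i) j] by [].
by apply/setP => k; rewrite !inE e_i /=; case: (e _ k).
Qed.

Let h : rat := (n./2)%:R.

Lemma lawXi_stay_move (f : config n) :
  lawXi i f = probX f * (bulb f i)%:R +
    \sum_(j < n) \sum_(e : config n)
       probX e * (~~ bulb e i && (j \in Jset i e))%:R / h * (f == swap i e j)%:R.
Proof.
rewrite exchange_big -(sumr_mul_eqr (fun e => probX e * (bulb e i)%:R) f).
rewrite -big_split /=; apply: eq_bigr => e _; rewrite /kernel (eq_sym f).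
have [valid_e | /probX0 ->] := boolP (valid e); last first.
  by rewrite !mul0r add0r big1 // => j _; rewrite !mul0r.
case: (bulb e i) => /=.
  by rewrite mulr1 big1 ?addr0 // => j _; rewrite mulr0 !mul0r.
rewrite mulr0 !mul0r add0r card_Jset // -/h mulr_sumr big_mkcond mulr_sumr /=.
by apply: eq_bigr => j _; case: (j \in _); rewrite /= ?mulr0 ?mul0r //; ring.
Qed.

(* Reverse the swap: the only configuration sent to f through partner j is swap i f j. *)
Lemma move_from_partner (f : config n) j :
  \sum_(e : config n)
     probX e * (~~ bulb e i && (j \in Jset i e))%:R / h * (f == swap i e j)%:R
  = probX f * (bulb f i && (j \in Jset i f))%:R / h.
Proof.
under eq_bigr do rewrite eq_swap.
rewrite sumr_mul_eqr probX_swap mem_Jset_swap.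
by case J_j: (j \in Jset i f); rewrite ?andbF // bulb_swap // negbK.
Qed.

Lemma lawXi_eq (f : config n) : lawXi i f = 2 * (probX f * (bulb f i)%:R).
Proof.
rewrite lawXi_stay_move; under eq_bigr do rewrite move_from_partner.
rewrite -big_distrl -mulr_sumr /=.
have [valid_f | /probX0 ->] := boolP (valid f); last by rewrite !mul0r addr0 mulr0.
suff -> : \sum_(j < n) (bulb f i && (j \in Jset i f))%:R = (bulb f i)%:R * h :> rat.
  by rewrite mulrA mulfK ?half_neq0 // -mulr2n mulr_natl.
case: (bulb f i) => /=; last by rewrite big1 ?mul0r.
rewrite mul1r /h -(card_Jset valid_f) -sum1_card natr_sum [RHS]big_mkcond /=.
by apply: eq_bigr => j _; case: (_ \in _).
Qed.

Lemma sum_kernel (e : config n) : valid e -> \sum_(f : config n) kernel i e f = 1.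
Proof.
move=> valid_e; rewrite /kernel; case: (bulb e i); first exact: sumr_eq1.
rewrite -mulr_sumr exchange_big /=.
under eq_bigr do rewrite sumr_eq1.
by rewrite sumr_const card_Jset // mulVf ?half_neq0.
Qed.

Lemma sum_lawXi : \sum_(f : config n) lawXi i f = 1.
Proof.
rewrite exchange_big -sum_probX; apply: eq_bigr => e _ /=.
have [valid_e | /probX0 ->] := boolP (valid e); last by rewrite big1 // => f _; rewrite mul0r.
by rewrite -mulr_sumr sum_kernel ?mulr1.
Qed.

Lemma prob_bulb : \sum_(e : config n) probX e * (bulb e i)%:R = 1 / 2.
Proof.
have sum2 : 2 * \sum_(e : config n) probX e * (bulb e i)%:R = 1.
  by rewrite mulr_sumr -[RHS](sum_lawXi); apply: eq_bigr => e _; rewrite lawXi_eq.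
by apply: (@mulfI _ 2) => //; rewrite sum2 mul1r mulfV.
Qed.

End Lightbulb.

Theorem lemma3p2 (n : nat) (hn : ~~ odd n) (i : 'I_n) (f : config n) :
  lawXi i f = condlaw i f.
Proof.
by rewrite lawXi_eq // /condlaw prob_bulb // invf_div divr1 mulrC.
Qed.
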